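(* Let $n\ge1$, $\boldsymbol\mu=(\mu_1,\dots,\mu_n)\in[0,1]^n$ and let $c$ be a positive integer. Let $\Omega=\{\mathbf{w}\in\{0,1\}^n:\sum_{i=1}^n w_i\ge c\}$. Then $$\max_{P\in\mathfrak{P}_{\boldsymbol\mu}}P(\Omega)=P^*_{\boldsymbol\mu}(\Omega).$$
   Context: $\mathfrak{P}$ is the set of probability distributions $P$ on $\{0,1\}^n$, written via conditionals as $P(\mathbf{w})=p_1(w_1)p_2(w_2|w_1)\cdots p_n(w_n|w_{n-1},\dots,w_1)$. $\mathfrak{P}_{\boldsymbol\mu}$ is the set of $P\in\mathfrak{P}$ such that $p_i(1|w_{i-1},\dots,w_1)\le\mu_i$ for every $i\in\{1,\dots,n\}$ and every history $(w_1,\dots,w_{i-1})\in\{0,1\}^{i-1}$ (for $i=1$: $p_1(1)\le\mu_1$). $P^*_{\boldsymbol\mu}$ is the product distribution $P^*_{\boldsymbol\mu}(\mathbf{w})=\prod_{i=1}^n p_i^*(w_i)$ with $p_i^*(1)=\mu_i$, $p_i^*(0)=1-\mu_i$. *)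

From mathcomp Require Import all_boot all_order all_algebra.
Set Implicit Arguments. Unset Strict Implicit. Unset Printing Implicit Defensive.
Import Order.TTheory GRing.Theory Num.Theory.
Local Open Scope ring_scope.

(* A distribution P on {0,1}^n is given through its conditionals:
   cond i h = p_i(1 | h) for a history h = (w_1,...,w_i) (as a seq of length i),
   for i = 0..n-1 (0-based). *)
Definition is_kernel (R : realFieldType) (n : nat) (cond : nat -> seq bool -> R) :=
  forall (i : nat) (h : seq bool), (i < n)%N -> size h = i ->
    0 <= cond i h <= 1.

Definition probK (R : realFieldType) (n : nat) (cond : nat -> seq bool -> R)
    (w : n.-tuple bool) : R :=
  \prod_(i < n) (if tnth w i then cond i (take i w) else 1 - cond i (take i w)).

Definition in_Pmu (R : realFieldType) (n : nat) (mu : 'I_n -> R)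
    (cond : nat -> seq bool -> R) :=
  is_kernel n cond /\
  forall (i : 'I_n) (h : seq bool), size h = i -> cond i h <= mu i.

Definition Pstar (R : realFieldType) (n : nat) (mu : 'I_n -> R)
    (w : n.-tuple bool) : R :=
  \prod_(i < n) (if tnth w i then mu i else 1 - mu i).

Definition Omega (n c : nat) : pred (n.-tuple bool) :=
  fun w => (c <= \sum_(i < n) nat_of_bool (tnth w i))%N.

Definition probOf (R : realFieldType) (n : nat) (P : n.-tuple bool -> R)
    (A : pred (n.-tuple bool)) : R :=
  \sum_(w : n.-tuple bool | A w) P w.
Arguments Omega n c : clear implicits.

(* Stochastic domination, coordinate by coordinate.  For every nondecreasing
   f on {0,1}^n and every P in P_mu, E_P[f] <= E_{P*_mu}[f]: condition on the
   first coordinate, apply induction to the two conditional laws, and note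
   that moving weight from 0 to 1 at the first coordinate, which is what
   replacing p_1(1) <= mu_1 by mu_1 does, can only increase the expectation
   because f(1, .) dominates f(0, .).  The indicator of Omega is such an f. *)
From mathcomp Require Import all_boot all_order all_algebra.
Import Order.TTheory GRing.Theory Num.Theory.
Local Open Scope ring_scope.
Set Implicit Arguments. Unset Strict Implicit. Unset Printing Implicit Defensive.
From mathcomp Require Import ring.

Section Kernels.
Variable R : realFieldType.

Definition shift_kernel (cond : nat -> seq bool -> R) (b : bool) :=
  fun i h => cond i.+1 (b :: h).

Definition dominated (n : nat) (cond : nat -> seq bool -> R) (m : nat -> R) :=
  forall i h, (i < n)%N -> size h = i -> cond i h <= m i.

Definition nondecreasing_tuple n (f : n.-tuple bool -> R) :=
  forall w w' : n.-tuple bool, (forall i, tnth w i ==> tnth w' i) -> f w <= f w'.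

Lemma sum_tuple_cons n (F : n.+1.-tuple bool -> R) :
  \sum_w F w = \sum_(t : n.-tuple bool) (F [tuple of true :: t] + F [tuple of false :: t]).
Proof.
rewrite (reindex (fun p : bool * n.-tuple bool => [tuple of p.1 :: p.2])) /=; last first.
  exists (fun w : n.+1.-tuple bool => (thead w, [tuple of behead w])).
    by case=> b t _; congr pair; apply/val_inj.
  by move=> w _; apply/val_inj; case: w => [[|x s]].
rewrite -(pair_bigA _ (fun (b : bool) (t : n.-tuple bool) => F [tuple of b :: t])) /=.
rewrite exchange_big /=.
by apply: eq_bigr => t _; rewrite big_bool.
Qed.

Lemma probK_cons n (cond : nat -> seq bool -> R) b (t : n.-tuple bool) :
  probK cond [tuple of b :: t] =
  (if b then cond 0%N [::] else 1 - cond 0%N [::]) * probK (shift_kernel cond b) t.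
Proof.
rewrite /probK big_ord_recl /=; congr (_ * _).
by apply: eq_bigr => i _; rewrite tnthS.
Qed.

Lemma is_kernel_shift n (cond : nat -> seq bool -> R) b :
  is_kernel n.+1 cond -> is_kernel n (shift_kernel cond b).
Proof. by move=> Hk i h Hi Hh; apply: Hk => //=; rewrite Hh. Qed.

Lemma dominated_shift n (cond : nat -> seq bool -> R) m b :
  dominated n.+1 cond m -> dominated n (shift_kernel cond b) (fun i => m i.+1).
Proof. by move=> Hd i h Hi Hh; apply: Hd => //=; rewrite Hh. Qed.

Lemma probK_ge0 n (cond : nat -> seq bool -> R) (w : n.-tuple bool) :
  is_kernel n cond -> 0 <= probK cond w.
Proof.
move=> Hk; apply: prodr_ge0 => i _.
have size_hist : size (take i w) = i by rewrite size_takel // size_tuple ltnW.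
have /andP[c0 c1] := Hk i _ (ltn_ord i) size_hist.
by case: (tnth w i); rewrite ?subr_ge0.
Qed.

Lemma nondecreasing_cons n (f : n.+1.-tuple bool -> R) b :
  nondecreasing_tuple f -> nondecreasing_tuple (fun t => f [tuple of b :: t]).
Proof.
move=> Hf w w' Hww'; apply: Hf => i.
by case: (unliftP ord0 i) => [j ->|->]; rewrite ?tnthS ?implybb.
Qed.

Lemma nondecreasing_head n (f : n.+1.-tuple bool -> R) (t : n.-tuple bool) :
  nondecreasing_tuple f -> f [tuple of false :: t] <= f [tuple of true :: t].
Proof.
by move=> Hf; apply: Hf => i; case: (unliftP ord0 i) => [j ->|->]; rewrite ?tnthS ?implybb.
Qed.

Lemma mixture_le (p m S0 S1 T0 T1 : R) :
  0 <= p -> p <= m -> m <= 1 -> S0 <= T0 -> S1 <= T1 -> T0 <= T1 ->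
  p * S1 + (1 - p) * S0 <= m * T1 + (1 - m) * T0.
Proof.
move=> p0 pm m1 hS0 hS1 hT; rewrite -subr_ge0.
have -> : m * T1 + (1 - m) * T0 - (p * S1 + (1 - p) * S0)
    = p * (T1 - S1) + (1 - p) * (T0 - S0) + (m - p) * (T1 - T0) by ring.
have p1 : p <= 1 := le_trans pm m1.
by rewrite !addr_ge0 // mulr_ge0 // subr_ge0.
Qed.

Lemma expectation_le_product n (cond : nat -> seq bool -> R) (m : nat -> R)
    (f : n.-tuple bool -> R) :
  is_kernel n cond -> dominated n cond m -> is_kernel n (fun i _ => m i) ->
  nondecreasing_tuple f ->
  \sum_w probK cond w * f w <= \sum_w probK (fun i _ => m i) w * f w.
Proof.
elim: n => [|n IH] in cond m f *.
  by move=> *; apply: ler_sum => w _; rewrite /probK !big_ord0.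
move=> Hk Hd Hm Hf; rewrite !sum_tuple_cons.
under eq_bigr => t _ do rewrite !probK_cons -!mulrA.
under [X in _ <= X]eq_bigr => t _ do rewrite !probK_cons -!mulrA.
rewrite !big_split /= -!mulr_sumr.
have [/andP[p0 _] /andP[_ m1]] := (Hk 0%N [::] erefl erefl, Hm 0%N [::] erefl erefl).
apply: mixture_le => //; first exact: Hd.
- apply: IH; [exact: is_kernel_shift | exact: dominated_shift
             | exact: (is_kernel_shift false Hm) | exact: nondecreasing_cons].
- apply: IH; [exact: is_kernel_shift | exact: dominated_shift
             | exact: (is_kernel_shift true Hm) | exact: nondecreasing_cons].
- apply: ler_sum => t _; apply: ler_wpM2l; last exact: nondecreasing_head.
  exact: (probK_ge0 _ (is_kernel_shift true Hm)).
Qed.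

Lemma probOfE n (P : n.-tuple bool -> R) (A : pred (n.-tuple bool)) :
  probOf P A = \sum_w P w * (A w)%:R.
Proof.
rewrite /probOf big_mkcond; apply: eq_bigr => w _.
by case: (A w); rewrite ?mulr1 ?mulr0.
Qed.

Lemma Omega_nondecreasing n c : nondecreasing_tuple (fun w => (Omega n c w)%:R : R).
Proof.
move=> w w' Hww'; rewrite ler_nat.
have count_le : (\sum_(i < n) tnth w i <= \sum_(i < n) tnth w' i)%N.
  by apply: leq_sum => i _; move: (Hww' i); case: (tnth w i); case: (tnth w' i).
case: (boolP (Omega n c w)) => //= hw.
by rewrite [Omega n c w'](leq_trans hw count_le).
Qed.

End Kernels.

(* [mu] extended by [0] outside ['I_n], so that it can be shifted. *)
Definition extend_ord (R : realFieldType) n (mu : 'I_n -> R) (i : nat) : R :=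
  if insub i is Some j then mu j else 0.

Lemma extend_ordE (R : realFieldType) n (mu : 'I_n -> R) (j : 'I_n) :
  extend_ord mu j = mu j.
Proof. by rewrite /extend_ord valK. Qed.

Lemma probK_extend_ord (R : realFieldType) n (mu : 'I_n -> R) (w : n.-tuple bool) :
  probK (fun i _ => extend_ord mu i) w = Pstar mu w.
Proof. by apply: eq_bigr => i _; rewrite extend_ordE. Qed.

Lemma in_Pmu_extend_ord (R : realFieldType) n (mu : 'I_n -> R) :
  (forall i, 0 <= mu i <= 1) -> in_Pmu mu (fun i _ => extend_ord mu i).
Proof.
move=> Hmu; split=> [i h Hi _|i h _]; last by rewrite extend_ordE.
by rewrite -[i]/(val (Ordinal Hi)) extend_ordE; apply: Hmu.
Qed.

Lemma in_Pmu_dominated (R : realFieldType) n (mu : 'I_n -> R) cond :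
  in_Pmu mu cond -> dominated n cond (extend_ord mu).
Proof.
by move=> [_ Hd] i h Hi Hh; rewrite -[i]/(val (Ordinal Hi)) extend_ordE; apply: Hd.
Qed.

Theorem mainTheorem14 (R : realFieldType) (n : nat) (mu : 'I_n -> R) (c : nat) :
  (1 <= n)%N ->
  (forall i, 0 <= mu i <= 1) ->
  (0 < c)%N ->
  (exists cond, in_Pmu mu cond /\
     probOf (probK cond) (Omega n c) = probOf (Pstar mu) (Omega n c)) /\
  (forall cond, in_Pmu mu cond ->
     probOf (probK cond) (Omega n c) <= probOf (Pstar mu) (Omega n c)).
Proof.
move=> _ Hmu _.
have star_Pmu := in_Pmu_extend_ord Hmu.
have probK_star := probK_extend_ord mu.
split.
  exists (fun i _ => extend_ord mu i); split=> //.
  by apply: eq_bigr => w _; rewrite probK_star.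
move=> cond Pmu_cond; rewrite !probOfE.
under [X in _ <= X]eq_bigr => w _ do rewrite -probK_star.
apply: expectation_le_product; first exact: Pmu_cond.1.
- exact: in_Pmu_dominated.
- exact: star_Pmu.1.
- exact: Omega_nondecreasing.
Qed.
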